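(* Let $a\in[0,\infty)$ and let $\theta:[0,1]\to[0,\infty]$ and $\vartheta:[0,\infty]\to[0,1]$ be continuous and decreasing functions such that $O_{\theta,\vartheta}(x,y)=\vartheta(\theta(x)+\theta(y))$ defines an overlap function $O_{\theta,\vartheta}:[0,1]^2\to[0,1]$, and suppose that at least one of the following holds: (1) $\theta(x)=\frac{a}{2}$ if and only if $x=1$; (2) $\vartheta(x)=1$ if and only if $x\in[0,a]$. Then there exist a pseudo automorphism $\mathcal{F}$ and a t-subnorm $T_{sub}$ such that $O_{\theta,\vartheta}(x,y)=\mathcal{F}(T_{sub}(x,y))$ for all $x,y\in[0,1]$.
   Context: ''Decreasing'' means non-increasing and ''increasing'' means non-decreasing. Arithmetic in $[0,\infty]$ uses $c+\infty=\infty$; continuity on $[0,\infty]$ refers to the usual topology of the extended half-line. An overlap function is a map $O:[0,1]^2\to[0,1]$ that is (O1) commutative, (O2) $O(x,y)=0$ iff $xy=0$, (O3) $O(x,y)=1$ iff $xy=1$, (O4) increasing in each variable, (O5) continuous. A pseudo automorphism is a continuous increasing map $\mathcal{F}:[0,1]\to[0,1]$ with $\mathcal{F}(x)=1$ iff $x=1$ and $\mathcal{F}(x)=0$ iff $x=0$. A t-subnorm is a commutative, associative map $T:[0,1]^2\to[0,1]$, increasing in each variable, with $T(x,y)\le\min\{x,y\}$ for all $x,y$. *)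

From HB Require Import structures.
From mathcomp Require Import all_boot all_order all_algebra.
From mathcomp Require Import all_classical all_reals all_analysis.
Set Implicit Arguments. Unset Strict Implicit. Unset Printing Implicit Defensive.
Import Order.TTheory GRing.Theory Num.Theory.
Import numFieldNormedType.Exports.
Local Open Scope classical_set_scope.
Local Open Scope ring_scope.

Definition unitI (R : realType) : set R := [set x : R | 0 <= x <= 1].
Definition nonnegE (R : realType) : set (\bar R) := [set x : \bar R | (0 <= x)%E].

Definition is_overlap (R : realType) (O : R -> R -> R) : Prop :=
  (forall x y, unitI x -> unitI y -> unitI (O x y)) /\
  (forall x y, unitI x -> unitI y -> O x y = O y x) /\
  (forall x y, unitI x -> unitI y -> (O x y = 0 <-> x * y = 0)) /\
  (forall x y, unitI x -> unitI y -> (O x y = 1 <-> x * y = 1)) /\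
  (forall x x' y, unitI x -> unitI x' -> unitI y -> x <= x' -> O x y <= O x' y) /\
  (forall x y y', unitI x -> unitI y -> unitI y' -> y <= y' -> O x y <= O x y') /\
  {within [set p : R * R | unitI p.1 /\ unitI p.2], continuous (fun p : R * R => O p.1 p.2)}.

Definition pseudo_automorphism (R : realType) (F : R -> R) : Prop :=
  (forall x, unitI x -> unitI (F x)) /\
  {within unitI (R:=R), continuous F} /\
  (forall x y, unitI x -> unitI y -> x <= y -> F x <= F y) /\
  (forall x, unitI x -> (F x = 1 <-> x = 1)) /\
  (forall x, unitI x -> (F x = 0 <-> x = 0)).

Definition t_subnorm (R : realType) (T : R -> R -> R) : Prop :=
  (forall x y, unitI x -> unitI y -> unitI (T x y)) /\
  (forall x y, unitI x -> unitI y -> T x y = T y x) /\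
  (forall x y z, unitI x -> unitI y -> unitI z -> T x (T y z) = T (T x y) z) /\
  (forall x x' y, unitI x -> unitI x' -> unitI y -> x <= x' -> T x y <= T x' y) /\
  (forall x y y', unitI x -> unitI y -> unitI y' -> y <= y' -> T x y <= T x y') /\
  (forall x y, unitI x -> unitI y -> T x y <= Num.min x y).

(* With c := theta 1, the function F z := O(z, 1) = vtheta (theta z + c) is a
   pseudo automorphism because O is an overlap function; c is finite, as
   otherwise O(0, 1) = vtheta (+oo) = O(1, 1).  Let T(x, y) be the least
   w in [0, 1] with theta w + c <= theta x + theta y, i.e. the pseudo-inverse
   of theta + c at theta x + theta y.  Continuity of theta gives
   theta (T(x, y)) + c = theta x + theta y unless T(x, y) = 0, and then
   O(x, y) <= O(0, 1) = 0 because vtheta decreases; hence O = F o T.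
   Both T(x, T(y, z)) and T(T(x, y), z) are the least w with
   theta w + 2c <= theta x + theta y + theta z, so T is associative; the other
   t-subnorm axioms follow from the monotonicity of theta. *)
From HB Require Import structures.
From mathcomp Require Import all_boot all_order all_algebra.
From mathcomp Require Import all_classical all_reals all_analysis.
From mathcomp Require Import lra.
Set Implicit Arguments. Unset Strict Implicit. Unset Printing Implicit Defensive.
Import Order.TTheory GRing.Theory Num.Theory.
Import numFieldNormedType.Exports.
Local Open Scope classical_set_scope.
Local Open Scope ring_scope.

Lemma unitI0 (R : realType) : unitI (0 : R).
Proof. by rewrite /unitI /= lexx ler01. Qed.

Lemma unitI1 (R : realType) : unitI (1 : R).
Proof. by rewrite /unitI /= lexx ler01. Qed.

Lemma continuous_within_unitI_ball (R : realType) (T : topologicalType)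
    (f : R -> T) g (P : T -> Prop) :
  {within unitI (R:=R), continuous f} -> unitI g -> nbhs (f g) P ->
  exists2 e : R, 0 < e & forall w, unitI w -> `|g - w| < e -> P (f w).
Proof.
move=> /subspace_continuousP cf ug /(cf g ug) /nbhs_ballP [e e0 ball_P].
by exists e => // w uw gw; apply: ball_P => //; rewrite /ball /= gw.
Qed.

Lemma continuous_within_square_partial (R : realType) (f : R -> R -> R) y :
  {within [set p : R * R | unitI p.1 /\ unitI p.2],
    continuous (fun p : R * R => f p.1 p.2)} ->
  unitI y -> {within unitI (R:=R), continuous (fun z => f z y)}.
Proof.
move=> /subspace_continuousP cf uy; apply/subspace_continuousP => x ux.
have pair_cvg : (fun z => (z, y)) @ within (unitI (R:=R)) (nbhs x) -->
    within [set p : R * R | unitI p.1 /\ unitI p.2] (nbhs (x, y)).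
  have pair_at : (fun z => (z, y)) @ x --> (x, y).
    exact: (cvg_pair (G := nbhs x) (H := nbhs y) cvg_id (cvg_cst y)).
  move=> P /= /pair_at; rewrite /= !nbhs_simpl /within /=.
  by apply: filterS => z sqP uz; apply: sqP.
exact: cvg_comp pair_cvg (cf (x, y) (conj ux uy)).
Qed.

Lemma pseudo_automorphism_overlap1 (R : realType) (O : R -> R -> R) :
  is_overlap O -> pseudo_automorphism (fun z => O z 1).
Proof.
move=> [range [_ [zero_iff [one_iff [mono_l [_ cont]]]]]].
have u1 := unitI1 R.
split; [|split; [|split; [|split]]].
- by move=> x ux; exact: range.
- exact: continuous_within_square_partial.
- by move=> x y ux uy; exact: mono_l.
- by move=> x ux; rewrite one_iff // mulr1.
- by move=> x ux; rewrite zero_iff // mulr1.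
Qed.

Section PseudoInverse.
Variables (R : realType) (phi : R -> \bar R).

Definition sublevel (M : \bar R) : set R := [set w | unitI w /\ (phi w <= M)%E].

Definition pinv (M : \bar R) : R := inf (sublevel M).

Lemma sublevel_lbound M : has_lbound (sublevel M).
Proof. by exists 0 => w [/andP []]. Qed.

Lemma pinv_le M w : sublevel M w -> pinv M <= w.
Proof. exact/ge_inf/sublevel_lbound. Qed.

Lemma sublevel1 M : (phi 1 <= M)%E -> sublevel M 1.
Proof. by split=> //; exact: unitI1. Qed.

Lemma pinv_unitI M : (phi 1 <= M)%E -> unitI (pinv M).
Proof.
move=> le1M; apply/andP; split; last exact/pinv_le/sublevel1.
by apply: lb_le_inf => [|w [/andP []]]; first by exists 1; exact: sublevel1.
Qed.

Lemma le_pinv M M' : (phi 1 <= M')%E -> (M' <= M)%E -> pinv M <= pinv M'.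
Proof.
move=> le1M' le_M'M; apply: lb_le_inf => [|w [uw hw]].
  by exists 1; exact: sublevel1.
by apply: pinv_le; split=> //; exact: le_trans le_M'M.
Qed.

Hypothesis phi_cont : {within unitI (R:=R), continuous phi}.

Lemma sublevel_pinv M : (phi 1 <= M)%E -> sublevel M (pinv M).
Proof.
move=> le1M; have ug := pinv_unitI le1M; split=> //.
rewrite leNgt; apply/negP.
move=> /open_ereal_gt' /(continuous_within_unitI_ball phi_cont ug) [e e0 near_g].
have inf_M : has_inf (sublevel M).
  by split; [exists 1; exact: sublevel1 | exact: sublevel_lbound].
have [w [uw hw] lt_w] := inf_adherent e0 inf_M.
have le_gw : pinv M <= w by exact: pinv_le.
have : (M < phi w)%E.
  by apply: near_g => //; rewrite ler0_norm ?subr_le0 // /pinv; lra.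
by rewrite ltNge hw.
Qed.

Lemma pinv_gt0_level M : (phi 1 <= M)%E -> 0 < pinv M -> phi (pinv M) = M.
Proof.
move=> le1M g_gt0; apply/le_anti; rewrite (sublevel_pinv le1M).2 /=.
have ug := pinv_unitI le1M; set g := pinv M in g_gt0 ug *.
rewrite leNgt; apply/negP.
move=> /open_ereal_lt' /(continuous_within_unitI_ball phi_cont ug) [e e0 near_g].
have d_gt0 : 0 < Num.min g e by rewrite lt_min g_gt0 e0.
have [d_le_g d_le_e] : Num.min g e <= g /\ Num.min g e <= e.
  by rewrite !ge_min !lexx orbT.
pose w := g - Num.min g e / 2.
have uw : unitI w by case/andP: ug => _ g1; apply/andP; split; rewrite /w; lra.
have : sublevel M w.
  split=> //; apply/ltW/near_g => //.
  by rewrite /w opprB addrC subrK ger0_norm; lra.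
by move/pinv_le; rewrite -/g /w; lra.
Qed.

Lemma pinv_eq0_or_level M : (phi 1 <= M)%E -> pinv M = 0 \/ phi (pinv M) = M.
Proof.
move=> le1M; have /andP [g_ge0 _] := pinv_unitI le1M.
by case: (ltgtP 0 (pinv M)) g_ge0 => [/(pinv_gt0_level le1M)|//|->]; [right|left].
Qed.

End PseudoInverse.

Section AdditiveGenerator.
Variables (R : realType) (theta : R -> \bar R).
Hypothesis theta_cont : {within unitI (R:=R), continuous theta}.
Hypothesis theta_decr :
  forall x y, unitI x -> unitI y -> x <= y -> (theta y <= theta x)%E.
Hypothesis theta1_fin : theta 1 \is a fin_num.

Definition theta_c z := (theta z + theta 1)%E.

Definition tsub x y := pinv theta_c (theta x + theta y)%E.

Lemma theta1_le z : unitI z -> (theta 1 <= theta z)%E.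
Proof. by move=> uz; apply: theta_decr => //; [exact: unitI1 | case/andP: uz]. Qed.

Lemma theta_c_decr x y : unitI x -> unitI y -> x <= y -> (theta_c y <= theta_c x)%E.
Proof. by move=> ux uy xy; apply: leeD2r; exact: theta_decr. Qed.

Lemma theta_c_cont : {within unitI (R:=R), continuous theta_c}.
Proof.
apply/subspace_continuousP => x ux; apply: cvgeD; last exact: cvg_cst.
  exact: fin_num_adde_defl.
by move/subspace_continuousP: theta_cont; apply.
Qed.

Lemma theta_c1_le x y : unitI x -> unitI y -> (theta_c 1 <= theta x + theta y)%E.
Proof. by move=> ux uy; apply: leeD; exact: theta1_le. Qed.

Lemma sublevel_theta_pinv M x : (theta_c 1 <= M)%E -> unitI x ->
  sublevel theta_c (theta x + theta (pinv theta_c M))%E =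
  [set w | unitI w /\ (theta_c w + theta 1 <= theta x + M)%E].
Proof.
move=> le1M ux.
have [g0|level] := pinv_eq0_or_level theta_c_cont le1M; last first.
  by apply: eq_set => w; rewrite -[in RHS]level /theta_c addeA leeD2rE.
have le0M := (sublevel_pinv theta_c_cont le1M).2; rewrite g0 in le0M *.
apply: eq_set => w; apply: propext; split=> -[uw _]; split=> //.
  rewrite addeC; apply: leeD; first exact: theta1_le.
  by apply: le_trans le0M; apply: theta_c_decr => //; [exact: unitI0 | case/andP: uw].
rewrite /theta_c [X in (_ <= X)%E]addeC; apply: leeD; last exact: theta1_le.
by apply: theta_decr => //; [exact: unitI0 | case/andP: uw].
Qed.

Lemma tsubA x y z : unitI x -> unitI y -> unitI z ->
  tsub x (tsub y z) = tsub (tsub x y) z.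
Proof.
move=> ux uy uz; rewrite /tsub [(theta (pinv _ _) + _)%E]addeC /pinv.
rewrite !sublevel_theta_pinv ?theta_c1_le //; congr inf; apply: eq_set => w.
by rewrite addeA [(theta z + _)%E]addeC.
Qed.

Lemma t_subnorm_tsub : t_subnorm tsub.
Proof.
split; [|split; [|split; [|split; [|split]]]].
- by move=> x y ux uy; apply: pinv_unitI; exact: theta_c1_le.
- by move=> x y _ _; rewrite /tsub addeC.
- exact: tsubA.
- move=> x x' y ux ux' uy xx'; apply: le_pinv; first exact: theta_c1_le.
  by apply: leeD2r; exact: theta_decr.
- move=> x y y' ux uy uy' yy'; apply: le_pinv; first exact: theta_c1_le.
  by apply: leeD2l; exact: theta_decr.
- move=> x y ux uy; rewrite le_min; apply/andP; split; apply: pinv_le; split=> //.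
    by rewrite /theta_c; apply: leeD2l; exact: theta1_le.
  by rewrite /theta_c [X in (_ <= X)%E]addeC; apply: leeD2l; exact: theta1_le.
Qed.

End AdditiveGenerator.

Section OverlapAdditiveGenerators.
Variables (R : realType) (theta : R -> \bar R) (vtheta : \bar R -> R).
Hypothesis theta_ge0 : forall x, unitI x -> (0 <= theta x)%E.
Hypothesis theta_cont : {within unitI (R:=R), continuous theta}.
Hypothesis theta_decr :
  forall x y, unitI x -> unitI y -> x <= y -> (theta y <= theta x)%E.
Hypothesis vtheta_unitI : forall u, nonnegE u -> unitI (vtheta u).
Hypothesis vtheta_decr :
  forall u v, nonnegE u -> nonnegE v -> (u <= v)%E -> vtheta v <= vtheta u.
Hypothesis overlap : is_overlap (fun x y => vtheta (theta x + theta y)%E).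

Lemma overlap_theta1_fin_num : theta 1 \is a fin_num.
Proof.
have [_ [_ [zero_iff [one_iff _]]]] := overlap.
have O01 := (zero_iff 0 1 (unitI0 R) (unitI1 R)).2 (mul0r 1).
have O11 := (one_iff 1 1 (unitI1 R) (unitI1 R)).2 (mulr1 1).
rewrite ge0_fin_numE; last exact/theta_ge0/unitI1.
rewrite ltey; apply/eqP => theta1_oo.
move: O01 O11; rewrite theta1_oo addey; last first.
  by have := theta_ge0 (unitI0 R); case: (theta 0).
by move=> -> /eqP; rewrite eq_sym oner_eq0.
Qed.

Lemma overlap_tsub x y : unitI x -> unitI y ->
  vtheta (theta x + theta y)%E = vtheta (theta_c theta (tsub theta x y)).
Proof.
move=> ux uy; have le1M := theta_c1_le theta_decr ux uy.
have cont := theta_c_cont theta_cont overlap_theta1_fin_num.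
have [g0|->] // := pinv_eq0_or_level cont le1M.
have [_ [_ [zero_iff _]]] := overlap.
have O01 : vtheta (theta_c theta 0) = 0.
  exact: (zero_iff 0 1 (unitI0 R) (unitI1 R)).2 (mul0r 1).
have le0M : (theta_c theta 0 <= theta x + theta y)%E.
  by rewrite -g0; exact: (sublevel_pinv cont le1M).2.
have nonneg_sum u v : unitI u -> unitI v -> nonnegE (theta u + theta v)%E.
  by move=> uu uv; apply: adde_ge0; exact: theta_ge0.
rewrite /tsub g0 O01; apply/le_anti/andP; split; last first.
  by case/andP: (vtheta_unitI (nonneg_sum _ _ ux uy)).
rewrite -O01; apply: vtheta_decr le0M; last exact: nonneg_sum.
by apply: nonneg_sum; [exact: unitI0 | exact: unitI1].
Qed.

End OverlapAdditiveGenerators.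

Theorem proposition5p1 (R : realType) (a : R) (theta : R -> \bar R)
  (vtheta : \bar R -> R) :
  0 <= a ->
  (forall x, unitI x -> (0 <= theta x)%E) ->
  (forall u, nonnegE u -> unitI (vtheta u)) ->
  {within unitI (R:=R), continuous theta} ->
  {within nonnegE (R:=R), continuous vtheta} ->
  (forall x y, unitI x -> unitI y -> x <= y -> (theta y <= theta x)%E) ->
  (forall u v, nonnegE u -> nonnegE v -> (u <= v)%E -> vtheta v <= vtheta u) ->
  is_overlap (fun x y => vtheta (theta x + theta y)%E) ->
  ((forall x, unitI x -> (theta x = (a / 2)%:E <-> x = 1)) \/
   (forall u, nonnegE u -> (vtheta u = 1 <-> (u <= a%:E)%E))) ->
  exists (F : R -> R) (T : R -> R -> R),
    pseudo_automorphism F /\ t_subnorm T /\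
    forall x y, unitI x -> unitI y ->
      vtheta (theta x + theta y)%E = F (T x y).
Proof.
move=> _ theta_ge0 vtheta_unitI theta_cont _ theta_decr vtheta_decr overlap _.
exists (fun z => vtheta (theta z + theta 1%R)%E), (tsub theta).
split; first exact: pseudo_automorphism_overlap1 overlap.
split; last exact: overlap_tsub.
exact/t_subnorm_tsub/(overlap_theta1_fin_num theta_ge0 overlap).
Qed.
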